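(* For all homogeneous $\varphi_1,\varphi_2,\psi\in CC^\bullet(\mathscr A)[1]$, as operators on $CC_\bullet(\mathscr A)[1]$: $\rho_{[\varphi_1,\varphi_2],\psi}-\rho_{\varphi_1,[\varphi_2,\psi]}+(-1)^{|\varphi_1|'|\varphi_2|'}\rho_{\varphi_2,[\varphi_1,\psi]}=[\mathcal L_{\varphi_1},\rho_{\varphi_2,\psi}]-(-1)^{|\varphi_1|'|\varphi_2|'}[\mathcal L_{\varphi_2},\rho_{\varphi_1,\psi}]$, where on the right $[\cdot,\cdot]$ is the graded commutator ($\mathcal L_\varphi$ has degree $|\varphi|'$, $\rho_{\varphi,\psi}$ has degree $|\varphi|'+|\psi|'$).
   Context: $R$ a graded-commutative ring containing $\mathbb Q$. $\mathscr A$: a set of objects with graded $R$-modules $\mathrm{Hom}_{\mathscr A}(X,Y)$. Set $\mathscr A(X_0,\dots,X_k):=\mathrm{Hom}(X_0,X_1)[1]\otimes\cdots\otimes\mathrm{Hom}(X_{k-1},X_k)[1]$; for $x$ in a shifted Hom, $|x|'$ denotes its shifted degree. $CC^\bullet(\mathscr A)=\prod_{X_0,\dots,X_k}\mathrm{Hom}_R(\mathscr A(X_0,\dots,X_k),\mathrm{Hom}(X_0,X_k))$ (graded), $CC_\bullet(\mathscr A)=\bigoplus\mathrm{Hom}(X_0,X_1)\otimes\mathscr A(X_1,\dots,X_k,X_0)$; elements of $CC_\bullet(\mathscr A)[1]$ are written $\mathbb X=x_0\otimes\cdots\otimes x_k$ with all $x_i$ in shifted Homs. For $\varphi\in CC^\bullet(\mathscr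 A)[1]$, $|\varphi|'$ denotes its degree in $CC^\bullet(\mathscr A)[1]$ (i.e. as a map of shifted spaces $\mathscr A(\cdots)\to\mathrm{Hom}[1]$). Operations: $(\varphi\circ\psi)(x_1,\dots,x_k)=\sum_{0\le i\le j\le k}(-1)^{|\psi|'(|x_1|'+\cdots+|x_i|')}\varphi(x_1,\dots,x_i,\psi(x_{i+1},\dots,x_j),x_{j+1},\dots,x_k)$; $[\varphi,\psi]=\varphi\circ\psi-(-1)^{|\varphi|'|\psi|'}\psi\circ\varphi$; $\mathcal L_\varphi(\mathbb X)=\sum_{0\le i\le j\le k}(-1)^{|\varphi|'(|x_0|'+\cdots+|x_i|')}x_0\otimes\cdots\otimes x_i\otimes\varphi(x_{i+1},\dots,x_j)\otimes x_{j+1}\otimes\cdots\otimes x_k+\sum_{0\le i\le j\le k}(-1)^{(|x_0|'+\cdots+|x_j|')(|x_{j+1}|'+\cdots+|x_k|')}\varphi(x_{j+1},\dots,x_k,x_0,\dots,x_i)\otimes x_{i+1}\otimes\cdots\otimes x_j$; $\rho_{\varphi,\psi}(\mathbb X)=\sum_{0\le i\le j\le s\le t\le k}(-1)^{\#}\varphi(x_{j+1},\dots,x_s,\psi(x_{s+1},\dots,x_t),x_{t+1},\dots,x_k,x_0,\dots,x_i)\otimes x_{i+1}\otimes\cdots\otimes x_j$, $\#=|\psi|'(|x_{j+1}|'+\cdots+|x_s|')+(|x_0|'+\cdots+|x_j|')(|x_{j+1}|'+\cdots+|x_k|')$. *)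

From HB Require Import structures.
From mathcomp Require Import all_boot all_order all_algebra.
Set Implicit Arguments. Unset Strict Implicit. Unset Printing Implicit Defensive.
Import GRing.Theory.
Local Open Scope ring_scope.

Section Hochschild.
Variables (Ob : Type) (M : zmodType).

(* A homogeneous element x of Hom(X,Y)[1]: source X, target Y,
   shifted degree |x|', value in the ambient module M (which contains all Homs). *)
Record hel := HEl { hsrc : Ob; htgt : Ob; hdeg : int; hval : M }.

(* A homogeneous Hochschild cochain phi in CC^*(A)[1]: its degree |phi|' and,
   for each starting object X0 and each composable string x_1..x_k of homogeneous
   elements starting at X0, the value phi(x_1,...,x_k) in Hom(X0,X_k). *)
Record coch := Coch { cdeg : int; cfun : Ob -> seq hel -> M }.

Definition spow (n : int) : int := if odd (absz n) then -1 else 1.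
Definition sumd (w : seq hel) : int := \sum_(x <- w) hdeg x.
Definition endo (X0 : Ob) (w : seq hel) : Ob := last X0 (map htgt w).
Definition app (f : coch) (X0 : Ob) (w : seq hel) : hel :=
  HEl X0 (endo X0 w) (cdeg f + sumd w) (cfun f X0 w).
(* half-open segment [a,b) of a word (0-based) *)
Definition seg (w : seq hel) (a b : nat) := drop a (take b w).

Definition pairs (n : nat) : seq (nat * nat) :=
  [seq (i, j) | i <- iota 0 n.+1, j <- iota i (n.+1 - i)].
Definition quads (n : nat) : seq (nat * nat * nat * nat) :=
  flatten [seq flatten [seq [seq (i, j, s, t) | s <- iota j (n.+1 - j),
                                                 t <- iota s (n.+1 - s)]
                        | j <- iota i (n.+1 - i)] | i <- iota 0 n.+1].

(* Gerstenhaber composition (phi o psi)(x_1..x_k); here 0-based: x_1..x_i = take i w *)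
Definition ccomp (f g : coch) (X0 : Ob) (w : seq hel) : M :=
  \sum_(ij <- pairs (size w))
     cfun f X0 (take ij.1 w ++ app g (endo X0 (take ij.1 w)) (seg w ij.1 ij.2)
                  :: drop ij.2 w) *~ spow (cdeg g * sumd (take ij.1 w)).

Definition cbr (f g : coch) : coch :=
  Coch (cdeg f + cdeg g)
       (fun X0 w => ccomp f g X0 w - ccomp g f X0 w *~ spow (cdeg f * cdeg g)).

(* formal integer combinations of elementary tensors x_0 (x) ... (x) x_k *)
Definition chain := seq (int * seq hel).
Definition ext (F : seq hel -> chain) (c : chain) : chain :=
  flatten [seq [seq (p.1 * q.1, q.2) | q <- F p.2] | p <- c].
Definition scalec (a : int) (c : chain) : chain := [seq (a * p.1, p.2) | p <- c].

(* L_phi on x_0 (x) ... (x) x_k (0-based word of size k+1) *)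
Definition Lop (f : coch) (w : seq hel) : chain :=
  if w is x :: _ then
    let bo := hsrc x in
    [seq (spow (cdeg f * sumd (take ij.1.+1 w)),
          take ij.1.+1 w ++ app f (endo bo (take ij.1.+1 w)) (seg w ij.1.+1 ij.2.+1)
            :: drop ij.2.+1 w) | ij <- pairs (size w).-1]
    ++
    [seq (spow (sumd (take ij.2.+1 w) * sumd (drop ij.2.+1 w)),
          app f (endo bo (take ij.2.+1 w)) (drop ij.2.+1 w ++ take ij.1.+1 w)
            :: seg w ij.1.+1 ij.2.+1) | ij <- pairs (size w).-1]
  else [::].

Definition rho (f g : coch) (w : seq hel) : chain :=
  if w is x :: _ then
    let bo := hsrc x in
    [seq let: (i, j, s, t) := q in
         let y := app g (endo bo (take s.+1 w)) (seg w s.+1 t.+1) in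
         (spow (cdeg g * sumd (seg w j.+1 s.+1)
                + sumd (take j.+1 w) * sumd (drop j.+1 w)),
          app f (endo bo (take j.+1 w))
              (seg w j.+1 s.+1 ++ y :: drop t.+1 w ++ take i.+1 w)
            :: seg w i.+1 j.+1)
    | q <- quads (size w).-1]
  else [::].

Definition gcomm (A : seq hel -> chain) (dA : int) (B : seq hel -> chain) (dB : int)
  (w : seq hel) : chain :=
  ext A (B w) ++ scalec (- spow (dA * dB)) (ext B (A w)).

Definition lhs62 (f1 f2 g : coch) (w : seq hel) : chain :=
  rho (cbr f1 f2) g w
  ++ scalec (-1) (rho f1 (cbr f2 g) w)
  ++ scalec (spow (cdeg f1 * cdeg f2)) (rho f2 (cbr f1 g) w).

Definition rhs62 (f1 f2 g : coch) (w : seq hel) : chain :=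
  gcomm (Lop f1) (cdeg f1) (rho f2 g) (cdeg f2 + cdeg g) w
  ++ scalec (- spow (cdeg f1 * cdeg f2))
       (gcomm (Lop f2) (cdeg f2) (rho f1 g) (cdeg f1 + cdeg g) w).

Definition evalc (V : zmodType) (tens : seq M -> V) (c : chain) : V :=
  \sum_(p <- c) tens (map hval p.2) *~ p.1.

Fixpoint composable (X0 : Ob) (w : seq hel) : Prop :=
  match w with [::] => True | x :: w' => hsrc x = X0 /\ composable (htgt x) w' end.

Definition homog (hom : Ob -> Ob -> int -> pred M) (w : seq hel) : bool :=
  all (fun x => hval x \in hom (hsrc x) (htgt x) (hdeg x)) w.

Definition coch_ok (hom : Ob -> Ob -> int -> pred M) (f : coch) : Prop :=
  (forall X0 w1 w2 X Y d (a b : M),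
     cfun f X0 (w1 ++ HEl X Y d (a + b) :: w2)
     = cfun f X0 (w1 ++ HEl X Y d a :: w2) + cfun f X0 (w1 ++ HEl X Y d b :: w2))
  /\ (forall X0 w, composable X0 w -> homog hom w ->
        cfun f X0 w \in hom X0 (endo X0 w) (cdeg f + sumd w)).

(* x_0 (x) ... (x) x_k with x_i in Hom(X_i, X_{i+1 mod k+1})[1] homogeneous *)
Definition cyc_word (hom : Ob -> Ob -> int -> pred M) (w : seq hel) : Prop :=
  exists x w', w = x :: w' /\ composable (hsrc x) w
               /\ endo (hsrc x) w = hsrc x /\ homog hom w.

End Hochschild.

From HB Require Import structures.
From mathcomp Require Import all_boot all_order all_algebra zify ring.
Set Implicit Arguments. Unset Strict Implicit. Unset Printing Implicit Defensive.
Import GRing.Theory.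
Local Open Scope ring_scope.

(* Every operator is written, on x :: w, as a sum over the ways of cutting
   w = x_1 ... x_k into consecutive pieces (sum_split, with the notation
   \sum_split (a, b, ... <- w)).  A small calculus of such sums (linearity,
   Fubini, refinement of a piece, cuts of a word containing marked letters)
   brings every term to a normal form: an iterated cut of w into seven pieces.
   Expanding the brackets, the left-hand side is A(f1,f2) - (-1)^{|f1||f2|} A(f2,f1)
   with A(fa,fb) = rho_{fa o fb,g} - rho_{fa,fb o g} + (-1)^{|fb||g|} rho_{fa,g o fb}
   (rho_assoc).  Classifying where the block of fb sits in the argument of fa,
   the terms of rho_{fa o fb,g} either cancel those of rho_{fa,fb o g} or agree,
   up to an explicit sign, with terms of L_fa rho_{fb,g} and rho_{fa,g} L_fb
   (rho_assoc_expand); the terms of the commutators where the inserted letter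
   lands in the tail of the tensor cancel in pairs (L_rho_tail_eq). *)

Definition sum_split (T : Type) (U : zmodType) (w : seq T) (F : seq T -> seq T -> U) : U :=
  \sum_(i <- iota 0 (size w).+1) F (take i w) (drop i w).
Arguments sum_split {T U} w F.

(* Iterated cuts: \sum_split (a1, ..., an <- w) F sums F over all
   decompositions w = a1 ++ ... ++ an, cutting off a1 first. *)
Notation "\sum_split ( a , b <- w ) F" :=
  (sum_split w (fun a b => F))
  (at level 41, F at level 41, a binder, b binder,
   format "'[' \sum_split ( a ,  b  <-  w ) '/  '  F ']'").
Notation "\sum_split ( a , b , c <- w ) F" :=
  (sum_split w (fun a r => \sum_split (b, c <- r) F))
  (at level 41, F at level 41, a binder, b binder, c binder,
   format "'[' \sum_split ( a ,  b ,  c  <-  w ) '/  '  F ']'").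
Notation "\sum_split ( a , b , c , d <- w ) F" :=
  (sum_split w (fun a r => \sum_split (b, c, d <- r) F))
  (at level 41, F at level 41, a binder, b binder, c binder, d binder,
   format "'[' \sum_split ( a ,  b ,  c ,  d  <-  w ) '/  '  F ']'").
Notation "\sum_split ( a , b , c , d , e <- w ) F" :=
  (sum_split w (fun a r => \sum_split (b, c, d, e <- r) F))
  (at level 41, F at level 41, a binder, b binder, c binder, d binder,
   e binder,
   format "'[' \sum_split ( a ,  b ,  c ,  d ,  e  <-  w ) '/  '  F ']'").
Notation "\sum_split ( a , b , c , d , e , f <- w ) F" :=
  (sum_split w (fun a r => \sum_split (b, c, d, e, f <- r) F))
  (at level 41, F at level 41, a binder, b binder, c binder, d binder,
   e binder, f binder,
   format "'[' \sum_split ( a ,  b ,  c ,  d ,  e ,  f  <-  w ) '/  '  F ']'").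
Notation "\sum_split ( a , b , c , d , e , f , g <- w ) F" :=
  (sum_split w (fun a r => \sum_split (b, c, d, e, f, g <- r) F))
  (at level 41, F at level 41, a binder, b binder, c binder, d binder,
   e binder, f binder, g binder,
   format "'[' \sum_split ( a ,  b ,  c ,  d ,  e ,  f ,  g  <-  w ) '/  '  F ']'").

Section SumSplitTheory.
Variables (T : Type) (U : zmodType).
Implicit Types (w u v : seq T) (y : T).
Local Notation word := (seq T).

Lemma eq_sum_split w (F G : word -> word -> U) :
  (forall a b, F a b = G a b) -> sum_split w F = sum_split w G.
Proof. by move=> FG; apply: eq_bigr. Qed.

Lemma eq_sum_split_cat w (F G : word -> word -> U) :
  (forall a b, a ++ b = w -> F a b = G a b) -> sum_split w F = sum_split w G.
Proof. by move=> FG; apply: eq_bigr => i _; rewrite FG ?cat_take_drop. Qed.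

Lemma sum_split_nil (F : word -> word -> U) :
  \sum_split (a, b <- [::]) F a b = F [::] [::].
Proof. by rewrite /sum_split big_seq1. Qed.

Lemma sum_split_cons y v (F : word -> word -> U) :
  \sum_split (a, b <- y :: v) F a b = F [::] (y :: v) + \sum_split (a, b <- v) F (y :: a) b.
Proof.
have iota0S n : iota 0 n.+1 = 0%N :: map S (iota 0 n).
  by rewrite /=; congr (_ :: _); rewrite (iotaDl 1 0).
by rewrite /sum_split [size _]/= iota0S big_cons big_map.
Qed.

(* A cut of u ++ y :: v falls either left or right of the letter y. *)
Lemma sum_split_cat_cons u y v (F : word -> word -> U) :
  \sum_split (a, b <- u ++ y :: v) F a b =
  \sum_split (a, b <- u) F a (b ++ y :: v) + \sum_split (a, b <- v) F (u ++ y :: a) b.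
Proof.
elim: u F => [|z u IHu] F /=; first by rewrite sum_split_cons sum_split_nil.
by rewrite !sum_split_cons IHu addrA.
Qed.

Lemma sum_splitD w (F G : word -> word -> U) :
  \sum_split (a, b <- w) (F a b + G a b) = sum_split w F + sum_split w G.
Proof. exact: big_split. Qed.

Lemma sum_splitN w (F : word -> word -> U) :
  \sum_split (a, b <- w) - F a b = - sum_split w F.
Proof. exact: sumrN. Qed.

Lemma sum_splitMz w (F : word -> word -> U) z :
  \sum_split (a, b <- w) F a b *~ z = sum_split w F *~ z.
Proof. by rewrite /sum_split mulrz_suml. Qed.

Lemma additive_sum_split (U' : zmodType) (h : {additive U -> U'}) w F :
  h (sum_split w F) = \sum_split (a, b <- w) h (F a b).
Proof. exact: raddf_sum. Qed.

Lemma eq_sum_split5 w (F G : word -> word -> word -> word -> word -> U) :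
  (forall a b c d e, F a b c d e = G a b c d e) ->
  \sum_split (a, b, c, d, e <- w) F a b c d e = \sum_split (a, b, c, d, e <- w) G a b c d e.
Proof. by move=> FG; do 4! apply: eq_sum_split => ? ?. Qed.

Lemma eq_sum_split7 w (F G : word -> word -> word -> word -> word -> word -> word -> U) :
  (forall a b c d e p q, F a b c d e p q = G a b c d e p q) ->
  \sum_split (a, b, c, d, e, p, q <- w) F a b c d e p q =
  \sum_split (a, b, c, d, e, p, q <- w) G a b c d e p q.
Proof. by move=> FG; do 6! apply: eq_sum_split => ? ?. Qed.

Lemma sum_split3D w (F G : word -> word -> word -> U) :
  \sum_split (a, b, c <- w) (F a b c + G a b c) =
  \sum_split (a, b, c <- w) F a b c + \sum_split (a, b, c <- w) G a b c.
Proof. by rewrite -sum_splitD; apply: eq_sum_split => a r; rewrite sum_splitD. Qed.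

Lemma sum_split5D w (F G : word -> word -> word -> word -> word -> U) :
  \sum_split (a, b, c, d, e <- w) (F a b c d e + G a b c d e) =
  \sum_split (a, b, c, d, e <- w) F a b c d e + \sum_split (a, b, c, d, e <- w) G a b c d e.
Proof.
rewrite -sum_splitD; apply: eq_sum_split => a r; rewrite -sum_splitD.
by apply: eq_sum_split => b r'; rewrite -sum_split3D.
Qed.

Lemma sum_split5N w (F : word -> word -> word -> word -> word -> U) :
  \sum_split (a, b, c, d, e <- w) - F a b c d e = - \sum_split (a, b, c, d, e <- w) F a b c d e.
Proof. by do 4! (rewrite -sum_splitN; apply: eq_sum_split => ? ?). Qed.

Lemma sum_split5Mz w (F : word -> word -> word -> word -> word -> U) z :
  \sum_split (a, b, c, d, e <- w) F a b c d e *~ z =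
  (\sum_split (a, b, c, d, e <- w) F a b c d e) *~ z.
Proof. by do 4! (rewrite -sum_splitMz; apply: eq_sum_split => ? ?). Qed.

Lemma sum_split7Mz w (F : word -> word -> word -> word -> word -> word -> word -> U) z :
  \sum_split (a, b, c, d, e, p, q <- w) F a b c d e p q *~ z =
  (\sum_split (a, b, c, d, e, p, q <- w) F a b c d e p q) *~ z.
Proof. by do 6! (rewrite -sum_splitMz; apply: eq_sum_split => ? ?). Qed.

Lemma sum_split_exchange w w' (F : word -> word -> word -> word -> U) :
  \sum_split (a, b <- w) \sum_split (c, d <- w') F a b c d =
  \sum_split (c, d <- w') \sum_split (a, b <- w) F a b c d.
Proof. exact: exchange_big. Qed.

Lemma sum_split_assoc w (F : word -> word -> word -> U) :
  \sum_split (u, v <- w) \sum_split (a, b <- u) F a b v =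
  \sum_split (a, b, v <- w) F a b v.
Proof.
elim: w F => [|y w IHw] F; first by rewrite !sum_split_nil.
rewrite !sum_split_cons sum_split_nil -addrA; congr (_ + _).
by under eq_sum_split => a b do rewrite sum_split_cons; rewrite sum_splitD IHw.
Qed.

Lemma sum_split_refine w (F : word -> word -> word -> word -> U) :
  \sum_split (u, v <- w) \sum_split (a, b <- u) F u a b v =
  \sum_split (a, b, v <- w) F (a ++ b) a b v.
Proof.
rewrite -sum_split_assoc; apply: eq_sum_split => u v.
by apply: eq_sum_split_cat => a b <-.
Qed.

Lemma sum_split_refine3 w (F : word -> word -> word -> word -> word -> U) :
  \sum_split (u, v <- w) \sum_split (a1, a2, a3 <- u) F u a1 a2 a3 v =
  \sum_split (a1, a2, a3, v <- w) F (a1 ++ a2 ++ a3) a1 a2 a3 v.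
Proof.
rewrite sum_split_refine; apply: eq_sum_split => a1 r.
by rewrite (sum_split_refine r (fun u a2 a3 v => F (a1 ++ u) a1 a2 a3 v)).
Qed.

Lemma sum_split_refine4 w (F : word -> word -> word -> word -> word -> word -> U) :
  \sum_split (u, v <- w) \sum_split (a1, a2, a3, a4 <- u) F u a1 a2 a3 a4 v =
  \sum_split (a1, a2, a3, a4, v <- w) F (a1 ++ a2 ++ a3 ++ a4) a1 a2 a3 a4 v.
Proof.
rewrite sum_split_refine; apply: eq_sum_split => a1 r.
by rewrite (sum_split_refine3 r (fun u a2 a3 a4 v => F (a1 ++ u) a1 a2 a3 a4 v)).
Qed.

Lemma sum_split_refine5 w
    (F : word -> word -> word -> word -> word -> word -> word -> U) :
  \sum_split (u, v <- w) \sum_split (a1, a2, a3, a4, a5 <- u) F u a1 a2 a3 a4 a5 v =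
  \sum_split (a1, a2, a3, a4, a5, v <- w) F (a1 ++ a2 ++ a3 ++ a4 ++ a5) a1 a2 a3 a4 a5 v.
Proof.
rewrite sum_split_refine; apply: eq_sum_split => a1 r.
by rewrite (sum_split_refine4 r (fun u a2 a3 a4 a5 v => F (a1 ++ u) a1 a2 a3 a4 a5 v)).
Qed.

Lemma sum_split_exchange3 w z (F : word -> word -> word -> word -> word -> U) :
  \sum_split (u, v <- w) \sum_split (a1, a2, a3 <- z) F u v a1 a2 a3 =
  \sum_split (a1, a2, a3 <- z) \sum_split (u, v <- w) F u v a1 a2 a3.
Proof.
by rewrite sum_split_exchange; apply: eq_sum_split => a1 r; rewrite sum_split_exchange.
Qed.

Lemma sum_split_exchange4 w z (F : word -> word -> word -> word -> word -> word -> U) :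
  \sum_split (u, v <- w) \sum_split (a1, a2, a3, a4 <- z) F u v a1 a2 a3 a4 =
  \sum_split (a1, a2, a3, a4 <- z) \sum_split (u, v <- w) F u v a1 a2 a3 a4.
Proof.
rewrite sum_split_exchange; apply: eq_sum_split => a1 r.
exact: (sum_split_exchange3 w r (fun u v => F u v a1)).
Qed.

Lemma sum_split_exchange5 w z
    (F : word -> word -> word -> word -> word -> word -> word -> U) :
  \sum_split (u, v <- w) \sum_split (a1, a2, a3, a4, a5 <- z) F u v a1 a2 a3 a4 a5 =
  \sum_split (a1, a2, a3, a4, a5 <- z) \sum_split (u, v <- w) F u v a1 a2 a3 a4 a5.
Proof.
rewrite sum_split_exchange; apply: eq_sum_split => a1 r.
exact: (sum_split_exchange4 w r (fun u v => F u v a1)).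
Qed.

End SumSplitTheory.

(* Under a cut of a piece e into sub-pieces, replace e by the concatenation
   of its sub-pieces. *)
Ltac subst_pieces := repeat (apply: eq_sum_split_cat => ? ? <-).

(* In cut5_refine_c3, the third piece c of a five-piece cut
   a b c d e is refined into three; in cut3_refine_a2c4, the pieces a and c of
   a three-piece cut are refined into two and four; and so on. *)
Section Refinements.
Variables (T : Type) (U : zmodType).
Local Notation word := (seq T).
Local Notation F7 := (word -> word -> word -> word -> word -> word -> word -> U).
Local Notation F8 := (word -> word -> word -> word -> word -> word -> word -> word -> U).
Local Notation F9 := (word -> word -> word -> word -> word -> word -> word -> word -> word -> U).
Implicit Types w : word.

Lemma cut5_refine_b3 w (F : F8) :
  \sum_split (a, b, c, d, e <- w) \sum_split (p, q, r <- b) F a b c d e p q r =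
  \sum_split (a, p, q, r, c, d, e <- w) F a (p ++ q ++ r) c d e p q r.
Proof.
apply: eq_sum_split => a r1.
under eq_sum_split => b r2 do under eq_sum_split => c r3 do rewrite sum_split_exchange3.
under eq_sum_split => b r2 do rewrite sum_split_exchange3.
by rewrite sum_split_refine3.
Qed.

Lemma cut5_refine_c3 w (F : F8) :
  \sum_split (a, b, c, d, e <- w) \sum_split (p, q, r <- c) F a b c d e p q r =
  \sum_split (a, b, p, q, r, d, e <- w) F a b (p ++ q ++ r) d e p q r.
Proof.
apply: eq_sum_split => a r1; apply: eq_sum_split => b r2.
under eq_sum_split => c r3 do rewrite sum_split_exchange3.
by rewrite sum_split_refine3.
Qed.

Lemma cut5_refine_d3 w (F : F8) :
  \sum_split (a, b, c, d, e <- w) \sum_split (p, q, r <- d) F a b c d e p q r =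
  \sum_split (a, b, c, p, q, r, e <- w) F a b c (p ++ q ++ r) e p q r.
Proof.
apply: eq_sum_split => a r1; apply: eq_sum_split => b r2; apply: eq_sum_split => c r3.
by rewrite sum_split_refine3.
Qed.

Lemma cut5_refine_e3 w (F : F8) :
  \sum_split (a, b, c, d, e <- w) \sum_split (p, q, r <- e) F a b c d e p q r =
  \sum_split (a, b, c, d, p, q, r <- w) F a b c d (p ++ q ++ r) p q r.
Proof.
apply: eq_sum_split => a r1; apply: eq_sum_split => b r2; apply: eq_sum_split => c r3.
by apply: eq_sum_split => d e; subst_pieces.
Qed.

Lemma cut5_refine_a3 w (F : F8) :
  \sum_split (a, b, c, d, e <- w) \sum_split (p, q, r <- a) F a b c d e p q r =
  \sum_split (p, q, r, b, c, d, e <- w) F (p ++ q ++ r) b c d e p q r.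
Proof.
under eq_sum_split => a r1 do under eq_sum_split => b r2 do
  under eq_sum_split => c r3 do rewrite sum_split_exchange3.
under eq_sum_split => a r1 do under eq_sum_split => b r2 do rewrite sum_split_exchange3.
under eq_sum_split => a r1 do rewrite sum_split_exchange3.
by rewrite sum_split_refine3.
Qed.

Lemma cut5_refine_c2e2 w (F : F9) :
  \sum_split (a, b, c, d, e <- w) \sum_split (p, q <- c) \sum_split (y, z <- e)
     F a b c d e p q y z =
  \sum_split (a, b, p, q, d, y, z <- w) F a b (p ++ q) d (y ++ z) p q y z.
Proof.
apply: eq_sum_split => a r1; apply: eq_sum_split => b r2.
under eq_sum_split => c r3 do rewrite sum_split_exchange.
rewrite sum_split_refine; apply: eq_sum_split => p r3; apply: eq_sum_split => q r4.
by apply: eq_sum_split => d e; subst_pieces.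
Qed.

Lemma cut5_exchange_a2 w (G : F7) :
  \sum_split (a, b, c, d, e <- w) \sum_split (y, z <- a) G a b c d e y z =
  \sum_split (y, z, b, c, d, e <- w) G (y ++ z) b c d e y z.
Proof.
under eq_sum_split => a r1 do under eq_sum_split => b r2 do
  under eq_sum_split => c r3 do rewrite sum_split_exchange.
under eq_sum_split => a r1 do under eq_sum_split => b r2 do rewrite sum_split_exchange.
under eq_sum_split => a r1 do rewrite sum_split_exchange.
by rewrite sum_split_refine.
Qed.

Lemma cut5_refine_c2a2 w (F : F9) :
  \sum_split (a, b, c, d, e <- w) \sum_split (p, q <- c) \sum_split (y, z <- a)
     F a b c d e p q y z =
  \sum_split (y, z, b, p, q, d, e <- w) F (y ++ z) b (p ++ q) d e p q y z.
Proof.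
under eq_sum_split => a r1 do under eq_sum_split => b r2 do
  under eq_sum_split => c r3 do under eq_sum_split => d e do rewrite sum_split_exchange.
rewrite cut5_exchange_a2; do 3! apply: eq_sum_split => ? ?.
under eq_sum_split => c r3 do rewrite sum_split_exchange.
by rewrite sum_split_refine.
Qed.

Lemma cut5_refine_e2a2 w (F : F9) :
  \sum_split (a, b, c, d, e <- w) \sum_split (p, q <- e) \sum_split (y, z <- a)
     F a b c d e p q y z =
  \sum_split (y, z, b, c, d, p, q <- w) F (y ++ z) b c d (p ++ q) p q y z.
Proof.
under eq_sum_split => a r1 do under eq_sum_split => b r2 do
  under eq_sum_split => c r3 do under eq_sum_split => d e do rewrite sum_split_exchange.
rewrite cut5_exchange_a2; do 5! apply: eq_sum_split => ? ?.
by subst_pieces.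
Qed.

Lemma cut3_refine_b5 w (F : F8) :
  \sum_split (a, b, c <- w) \sum_split (p1, p2, p3, p4, p5 <- b) F a b c p1 p2 p3 p4 p5 =
  \sum_split (a, p1, p2, p3, p4, p5, c <- w) F a (p1 ++ p2 ++ p3 ++ p4 ++ p5) c p1 p2 p3 p4 p5.
Proof. by apply: eq_sum_split => a r; rewrite sum_split_refine5. Qed.

Lemma cut3_refine_c5 w (F : F8) :
  \sum_split (a, b, c <- w) \sum_split (p1, p2, p3, p4, p5 <- c) F a b c p1 p2 p3 p4 p5 =
  \sum_split (a, b, p1, p2, p3, p4, p5 <- w) F a b (p1 ++ p2 ++ p3 ++ p4 ++ p5) p1 p2 p3 p4 p5.
Proof. by apply: eq_sum_split => a r; apply: eq_sum_split => b c; subst_pieces. Qed.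

Lemma cut3_refine_a2c4 w (F : F9) :
  \sum_split (a, b, c <- w) \sum_split (y1, y2 <- a) \sum_split (p1, p2, p3, p4 <- c)
     F a b c y1 y2 p1 p2 p3 p4 =
  \sum_split (y1, y2, b, p1, p2, p3, p4 <- w)
    F (y1 ++ y2) b (p1 ++ p2 ++ p3 ++ p4) y1 y2 p1 p2 p3 p4.
Proof.
under eq_sum_split => a r do rewrite sum_split_exchange.
rewrite sum_split_refine; do 2! apply: eq_sum_split => ? ?.
by apply: eq_sum_split => b c; subst_pieces.
Qed.

Lemma cut3_refine_a3c3 w (F : F9) :
  \sum_split (a, b, c <- w) \sum_split (y1, y2, y3 <- a) \sum_split (p1, p2, p3 <- c)
     F a b c y1 y2 y3 p1 p2 p3 =
  \sum_split (y1, y2, y3, b, p1, p2, p3 <- w)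
    F (y1 ++ y2 ++ y3) b (p1 ++ p2 ++ p3) y1 y2 y3 p1 p2 p3.
Proof.
under eq_sum_split => a r do rewrite sum_split_exchange3.
rewrite sum_split_refine3; do 3! apply: eq_sum_split => ? ?.
by apply: eq_sum_split => b c; subst_pieces.
Qed.

Lemma cut3_refine_a4c2 w (F : F9) :
  \sum_split (a, b, c <- w) \sum_split (y1, y2, y3, y4 <- a) \sum_split (p1, p2 <- c)
     F a b c y1 y2 y3 y4 p1 p2 =
  \sum_split (y1, y2, y3, y4, b, p1, p2 <- w)
    F (y1 ++ y2 ++ y3 ++ y4) b (p1 ++ p2) y1 y2 y3 y4 p1 p2.
Proof.
under eq_sum_split => a r do rewrite sum_split_exchange4.
rewrite sum_split_refine4; do 4! apply: eq_sum_split => ? ?.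
by apply: eq_sum_split => b c; subst_pieces.
Qed.

Lemma cut3_refine_a5 w (F : F8) :
  \sum_split (a, b, c <- w) \sum_split (y1, y2, y3, y4, y5 <- a) F a b c y1 y2 y3 y4 y5 =
  \sum_split (y1, y2, y3, y4, y5, b, c <- w) F (y1 ++ y2 ++ y3 ++ y4 ++ y5) b c y1 y2 y3 y4 y5.
Proof.
by under eq_sum_split => a r do rewrite sum_split_exchange5; rewrite sum_split_refine5.
Qed.

Lemma sum_split3_marked2 c e a (y z : T) (F : word -> word -> word -> U) :
  \sum_split (p1, p2, p3 <- c ++ y :: e ++ z :: a) F p1 p2 p3 =
  \sum_split (p1, p2, q <- c) F p1 p2 (q ++ y :: e ++ z :: a)
  + \sum_split (p1, q <- c) \sum_split (p, q' <- e) F p1 (q ++ y :: p) (q' ++ z :: a)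
  + \sum_split (p1, q <- c) \sum_split (p, q' <- a) F p1 (q ++ y :: e ++ z :: p) q'
  + \sum_split (p, p2, p3 <- e) F (c ++ y :: p) p2 (p3 ++ z :: a)
  + \sum_split (p, t <- e) \sum_split (p2, p3 <- a) F (c ++ y :: p) (t ++ z :: p2) p3
  + \sum_split (p, p2, p3 <- a) F (c ++ y :: e ++ z :: p) p2 p3.
Proof.
have cut_right_of_y :
    \sum_split (p, t <- e ++ z :: a) \sum_split (p2, p3 <- t) F (c ++ y :: p) p2 p3 =
    \sum_split (p, p2, p3 <- e) F (c ++ y :: p) p2 (p3 ++ z :: a)
    + \sum_split (p, t <- e) \sum_split (p2, p3 <- a) F (c ++ y :: p) (t ++ z :: p2) p3
    + \sum_split (p, p2, p3 <- a) F (c ++ y :: e ++ z :: p) p2 p3.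
  rewrite sum_split_cat_cons; under eq_sum_split => p t do rewrite sum_split_cat_cons.
  by rewrite sum_splitD.
rewrite sum_split_cat_cons cut_right_of_y.
under eq_sum_split => p1 q do rewrite 2!sum_split_cat_cons.
by rewrite !sum_splitD !addrA.
Qed.

Lemma sum_split5_marked u (y : T) v (F : word -> word -> word -> word -> word -> U) :
  \sum_split (p1, p2, p3, p4, p5 <- u ++ y :: v) F p1 p2 p3 p4 p5 =
  \sum_split (p1, p2, p3, p4, t <- u) F p1 p2 p3 p4 (t ++ y :: v)
  + \sum_split (p1, p2, p3, q <- u) \sum_split (p, t <- v) F p1 p2 p3 (q ++ y :: p) t
  + \sum_split (p1, p2, q <- u) \sum_split (p, p4, p5 <- v) F p1 p2 (q ++ y :: p) p4 p5
  + \sum_split (p1, q <- u) \sum_split (p, p3, p4, p5 <- v) F p1 (q ++ y :: p) p3 p4 p5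
  + \sum_split (p, p2, p3, p4, p5 <- v) F (u ++ y :: p) p2 p3 p4 p5.
Proof.
rewrite sum_split_cat_cons.
under eq_sum_split => p1 q do rewrite sum_split_cat_cons.
under eq_sum_split => p1 q do under eq_sum_split => p2 q' do rewrite sum_split_cat_cons.
under eq_sum_split => p1 q do under eq_sum_split => p2 q' do
  under eq_sum_split => p3 q'' do rewrite sum_split_cat_cons.
under eq_sum_split => p1 q do under eq_sum_split => p2 q' do rewrite sum_splitD.
under eq_sum_split => p1 q do rewrite 2!sum_splitD.
by rewrite !sum_splitD ?addrA.
Qed.

End Refinements.

Section IndexSums.
Variables (Ob : Type) (M : zmodType) (U : zmodType).
Local Notation word := (seq (hel Ob M)).
Implicit Types w : word.

Lemma take_seg w i j : (i <= j)%N -> take j w = take i w ++ seg w i j.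
Proof. by move=> le_ij; rewrite /seg -{1}(cat_take_drop i (take j w)) take_takel. Qed.

Lemma drop_seg w j s : (j <= s)%N -> drop j w = seg w j s ++ drop s w.
Proof.
by move=> le_js; rewrite -{1}(cat_take_drop (s - j) (drop j w)) take_drop drop_drop subnK.
Qed.

Lemma sum_iota_split w i (G : nat -> U) (F : word -> word -> U) :
  (i <= size w)%N ->
  (forall j, (i <= j <= size w)%N -> G j = F (seg w i j) (drop j w)) ->
  \sum_(j <- iota i ((size w).+1 - i)) G j = sum_split (drop i w) F.
Proof.
move=> le_iw GF; rewrite /sum_split size_drop -[i]addn0 iotaDl big_map addn0 subSn //.
apply: eq_big_seq => k; rewrite mem_iota add0n ltnS => /andP[_ le_kw].
rewrite GF; last by rewrite leq_addr -leq_subRL.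
by rewrite /seg take_drop drop_drop addnC.
Qed.

Lemma sum_iota0_split w (G : nat -> U) (F : word -> word -> U) :
  (forall j, (j <= size w)%N -> G j = F (take j w) (drop j w)) ->
  \sum_(j <- iota 0 (size w).+1) G j = sum_split w F.
Proof.
move=> GF; have := @sum_iota_split w 0 G F (leq0n _).
by rewrite subn0 drop0; apply => j /andP[_ le_jw]; rewrite /seg drop0 GF.
Qed.

Lemma sum_pairs_split w (H : nat * nat -> U) (F : word -> word -> word -> U) :
  (forall i j, (i <= j <= size w)%N -> H (i, j) = F (take i w) (seg w i j) (drop j w)) ->
  \sum_(ij <- pairs (size w)) H ij = \sum_split (a, b, c <- w) F a b c.
Proof.
move=> HF; rewrite /pairs big_allpairs_dep.
by apply: sum_iota0_split => i le_iw; apply: sum_iota_split => // j le_ij; apply: HF.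
Qed.

Lemma sum_quads_split w (H : nat * nat * nat * nat -> U)
    (F : word -> word -> word -> word -> word -> U) :
  (forall i j s t, (i <= j)%N -> (j <= s)%N -> (s <= t <= size w)%N ->
     H (i, j, s, t) = F (take i w) (seg w i j) (seg w j s) (seg w s t) (drop t w)) ->
  \sum_(q <- quads (size w)) H q = \sum_split (a, b, c, d, e <- w) F a b c d e.
Proof.
move=> HF; rewrite /quads big_flatten big_map.
apply: sum_iota0_split => i le_iw.
rewrite big_flatten big_map; apply: sum_iota_split => // j /andP[le_ij le_jw].
rewrite big_allpairs_dep; apply: sum_iota_split => // s /andP[le_js le_sw].
by apply: sum_iota_split => // t le_st; apply: HF.
Qed.

End IndexSums.

Section Chains.
Variables (Ob : Type) (M : zmodType) (U : zmodType).
Local Notation word := (seq (hel Ob M)).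
Local Notation chain := (chain Ob M).
Local Notation coch := (coch Ob M).
Implicit Types (K : int -> word -> U) (f g : coch) (w : word).

Definition sum_chain (c : chain) K : U := \sum_(p <- c) K p.1 p.2.

Lemma sum_chain_scale a (c : chain) K :
  sum_chain (scalec a c) K = sum_chain c (fun s ws => K (a * s) ws).
Proof. exact: big_map. Qed.

Lemma sum_chain_ext (F : word -> chain) (c : chain) K :
  sum_chain (ext F c) K =
  sum_chain c (fun s ws => sum_chain (F ws) (fun s' ws' => K (s * s') ws')).
Proof. by rewrite /sum_chain big_flatten big_map; apply: eq_bigr => p _; rewrite big_map. Qed.

Lemma sum_chain_Lop f x w K :
  sum_chain (Lop f (x :: w)) K =
  \sum_split (a, b, c <- w)
     K (spow (cdeg f * sumd (x :: a))) (x :: a ++ app f (endo (hsrc x) (x :: a)) b :: c)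
  + \sum_split (a, b, c <- w)
     K (spow (sumd (x :: a ++ b) * sumd c))
       (app f (endo (hsrc x) (x :: a ++ b)) (c ++ x :: a) :: b).
Proof.
rewrite /Lop /sum_chain big_cat !big_map /=; congr (_ + _).
  by apply: (sum_pairs_split (H := fun ij => K (spow (cdeg f * sumd (x :: take ij.1 w)))
          (x :: take ij.1 w ++ app f (endo (hsrc x) (x :: take ij.1 w)) (seg w ij.1 ij.2)
             :: drop ij.2 w))).
apply: (sum_pairs_split (H := fun ij => K (spow (sumd (x :: take ij.2 w) * sumd (drop ij.2 w)))
          (app f (endo (hsrc x) (x :: take ij.2 w)) (drop ij.2 w ++ x :: take ij.1 w)
             :: seg w ij.1 ij.2))).
by move=> i j /andP[le_ij _] /=; rewrite (take_seg w le_ij).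
Qed.

Lemma sum_chain_rho f g x w K :
  sum_chain (rho f g (x :: w)) K =
  \sum_split (a, b, c, d, e <- w)
     K (spow (cdeg g * sumd c + sumd (x :: a ++ b) * sumd (c ++ d ++ e)))
       (app f (endo (hsrc x) (x :: a ++ b))
            (c ++ app g (endo (hsrc x) (x :: a ++ b ++ c)) d :: e ++ x :: a) :: b).
Proof.
rewrite /rho /sum_chain big_map /=.
pose H := fun q : nat * nat * nat * nat => let: (i, j, s, t) := q in
   K (spow (cdeg g * sumd (seg w j s) + sumd (x :: take j w) * sumd (drop j w)))
     (app f (endo (hsrc x) (x :: take j w))
       (seg w j s ++ app g (endo (hsrc x) (x :: take s w)) (seg w s t) :: drop t w ++ x :: take i w)
       :: seg w i j).
rewrite (eq_bigr H); last by case=> [[[i j] s] t].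
apply: sum_quads_split => i j s t le_ij le_js /andP[le_st _] /=.
by rewrite (take_seg w le_js) (take_seg w le_ij) (drop_seg w le_js) (drop_seg w le_st) -!catA.
Qed.

Lemma ccomp_split f g X0 w :
  ccomp f g X0 w = \sum_split (a, b, c <- w)
     cfun f X0 (a ++ app g (endo X0 a) b :: c) *~ spow (cdeg g * sumd a).
Proof.
by apply: (sum_pairs_split (H := fun ij => cfun f X0 (take ij.1 w ++ app g (endo X0 (take ij.1 w))
     (seg w ij.1 ij.2) :: drop ij.2 w) *~ spow (cdeg g * sumd (take ij.1 w)))).
Qed.

Lemma additive_ccomp (h : {additive M -> U}) f g X0 w :
  h (ccomp f g X0 w) = \sum_split (a, b, c <- w)
     h (cfun f X0 (a ++ app g (endo X0 a) b :: c)) *~ spow (cdeg g * sumd a).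
Proof.
rewrite ccomp_split additive_sum_split; apply: eq_sum_split => a r.
by rewrite additive_sum_split; apply: eq_sum_split => b c; rewrite raddfMz.
Qed.

End Chains.

Section AdditiveOf.
Variables (U U' : zmodType) (h : U -> U') (hD : {morph h : a b / a + b}).

Lemma morph_add0 : h 0 = 0.
Proof. by apply: (addIr (h 0)); rewrite -hD !add0r. Qed.

Definition additive_of : {additive U -> U'} :=
  HB.pack h (GRing.isNmodMorphism.Build U U' h (morph_add0, hD)).

End AdditiveOf.

Lemma spowD m n : spow (m + n) = spow m * spow n.
Proof.
rewrite /spow; have -> : odd (absz (m + n)) = odd (absz m) (+) odd (absz n) by lia.
by case: (odd _); case: (odd _); rewrite ?mulN1r ?mulr1 ?opprK.
Qed.

Lemma spow_par m n : odd (absz m) = odd (absz n) -> spow m = spow n.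
Proof. by rewrite /spow => ->. Qed.

Section Degrees.
Variables (Ob : Type) (M : zmodType).
Local Notation word := (seq (hel Ob M)).
Implicit Types (u v : word) (y : hel Ob M) (f : coch Ob M).

Lemma sumd_cat u v : sumd (u ++ v) = sumd u + sumd v.
Proof. exact: big_cat. Qed.

Lemma sumd_cons y u : sumd (y :: u) = hdeg y + sumd u.
Proof. exact: big_cons. Qed.

Lemma hdeg_app f X u : hdeg (app f X u) = cdeg f + sumd u.
Proof. by []. Qed.

Lemma endo_cat X u v : endo X (u ++ v) = endo (endo X u) v.
Proof. by rewrite /endo map_cat last_cat. Qed.

Lemma endo_cons X y u : endo X (y :: u) = endo (htgt y) u.
Proof. by []. Qed.

Lemma htgt_app f X u : htgt (app f X u) = endo X u.
Proof. by []. Qed.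

End Degrees.

(* Two signs agree when their exponents, expanded in the degrees of the
   pieces, have the same parity. *)
Ltac sign_solve := rewrite -?spowD; apply: spow_par;
  rewrite ?(sumd_cat, sumd_cons, hdeg_app); lia.

(* Normalize the objects at which the cochains are evaluated. *)
Ltac objects_solve :=
  repeat (rewrite -catA || rewrite cat_cons); by rewrite ?(endo_cons, endo_cat, htgt_app).

Definition multilinear (Ob : Type) (M : zmodType) (f : coch Ob M) : Prop :=
  forall X0 w1 w2 X Y d (a b : M),
    cfun f X0 (w1 ++ HEl X Y d (a + b) :: w2)
    = cfun f X0 (w1 ++ HEl X Y d a :: w2) + cfun f X0 (w1 ++ HEl X Y d b :: w2).

Definition comp_coch (Ob : Type) (M : zmodType) (n : int) (f h : coch Ob M) : coch Ob M :=
  Coch n (ccomp f h).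

Section NormalForms.
Variables (Ob : Type) (M V : zmodType) (tens : seq M -> V).
Hypothesis tens_add : forall (w1 w2 : seq M) (a b : M),
  tens (w1 ++ (a + b) :: w2) = tens (w1 ++ a :: w2) + tens (w1 ++ b :: w2).
Variables (g : coch Ob M) (x : hel Ob M) (w : seq (hel Ob M)).
Local Notation word := (seq (hel Ob M)).
Local Notation coch := (coch Ob M).
Local Notation ev := (evalc tens).
Implicit Types (f h fa fb : coch) (n : int).

Definition tensor (ws : word) : V := tens (map (@hval Ob M) ws).

Lemma evalc_sum_chain (c : chain Ob M) : ev c = sum_chain c (fun s ws => tensor ws *~ s).
Proof. by []. Qed.

Definition tens_head (rest : seq M) : {additive M -> V} :=
  @additive_of _ _ (fun m => tens (m :: rest)) (tens_add [::] rest).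

Definition coch_slot f (Hf : multilinear f) X0 w1 w2 X Y d : {additive M -> M} :=
  @additive_of _ _ (fun m => cfun f X0 (w1 ++ HEl X Y d m :: w2)) (Hf X0 w1 w2 X Y d).

Definition head_src (a b : word) := endo (hsrc x) (x :: a ++ b).
Definition inner_src (a b c : word) := endo (hsrc x) (x :: a ++ b ++ c).
Definition inner (a b c d : word) := app g (inner_src a b c) d.
Definition rho_sign n (a b c d e : word) :=
  spow (n * sumd c + sumd (x :: a ++ b) * sumd (c ++ d ++ e)).
Definition rho_head f (a b c d e : word) :=
  app f (head_src a b) (c ++ inner a b c d :: e ++ x :: a).

Definition comp_term fa fb (a b c d e a1 a2 a3 : word) :=
  tensor (app fa (head_src a b) (a1 ++ app fb (endo (head_src a b) a1) a2 :: a3) :: b)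
    *~ spow (cdeg fb * sumd a1) *~ rho_sign (cdeg g) a b c d e.

Lemma evalc_rho_comp_cuts n fa fb :
  ev (rho (comp_coch n fa fb) g (x :: w)) =
  \sum_split (a, b, c, d, e <- w)
    \sum_split (a1, a2, a3 <- c ++ inner a b c d :: e ++ x :: a)
      comp_term fa fb a b c d e a1 a2 a3.
Proof.
rewrite evalc_sum_chain sum_chain_rho; apply: eq_sum_split5 => a b c d e.
transitivity (tens_head (map (@hval Ob M) b)
                (ccomp fa fb (head_src a b) (c ++ inner a b c d :: e ++ x :: a))
                *~ rho_sign (cdeg g) a b c d e); first by [].
rewrite additive_ccomp -sum_splitMz; apply: eq_sum_split => a1 r.
by rewrite -sum_splitMz; apply: eq_sum_split.
Qed.

(* The six families of terms of rho_{fa o fb, g}, according to the pieces of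
   the argument c g(d) e x a of fa where the block of fb starts and ends. *)
Definition comp_in_c fa fb : V :=
  \sum_split (a, b, p, q, r, d, e <- w)
    comp_term fa fb a b (p ++ q ++ r) d e p q (r ++ inner a b (p ++ q ++ r) d :: e ++ x :: a).

Definition comp_over_inner fa fb : V :=
  \sum_split (a, b, p, q, d, y, z <- w)
    comp_term fa fb a b (p ++ q) d (y ++ z) p (q ++ inner a b (p ++ q) d :: y) (z ++ x :: a).

Definition comp_over_all fa fb : V :=
  \sum_split (y, z, b, p, q, d, e <- w)
    comp_term fa fb (y ++ z) b (p ++ q) d e p (q ++ inner (y ++ z) b (p ++ q) d :: e ++ x :: y) z.

Definition comp_in_e fa fb : V :=
  \sum_split (a, b, c, d, p, q, r <- w)
    comp_term fa fb a b c d (p ++ q ++ r) (c ++ inner a b c d :: p) q (r ++ x :: a).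

Definition comp_over_x fa fb : V :=
  \sum_split (y, z, b, c, d, p, q <- w)
    comp_term fa fb (y ++ z) b c d (p ++ q) (c ++ inner (y ++ z) b c d :: p) (q ++ x :: y) z.

Definition comp_in_a fa fb : V :=
  \sum_split (p, q, r, b, c, d, e <- w)
    comp_term fa fb (p ++ q ++ r) b c d e (c ++ inner (p ++ q ++ r) b c d :: e ++ x :: p) q r.

Lemma evalc_rho_comp n fa fb :
  ev (rho (comp_coch n fa fb) g (x :: w)) =
  comp_in_c fa fb + comp_over_inner fa fb + comp_over_all fa fb
  + comp_in_e fa fb + comp_over_x fa fb + comp_in_a fa fb.
Proof.
rewrite evalc_rho_comp_cuts.
under eq_sum_split5 => a b c d e do rewrite sum_split3_marked2.
rewrite !sum_split5D.
by rewrite cut5_refine_e3 cut5_refine_c3 cut5_refine_c2e2 cut5_refine_c2a2 cut5_refine_e2a2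
  cut5_refine_a3.
Qed.

Definition inner_comp_term n fa h1 h2 (a b c d e d1 d2 d3 : word) :=
  tensor (app fa (head_src a b)
     (c ++ HEl (inner_src a b c) (endo (inner_src a b c) d) (n + sumd d)
           (cfun h1 (inner_src a b c) (d1 ++ app h2 (endo (inner_src a b c) d1) d2 :: d3))
        :: e ++ x :: a) :: b)
    *~ spow (cdeg h2 * sumd d1) *~ rho_sign n a b c d e.

Definition inner_comp_sum n fa h1 h2 : V :=
  \sum_split (a, b, c, d1, d2, d3, e <- w)
    inner_comp_term n fa h1 h2 a b c (d1 ++ d2 ++ d3) e d1 d2 d3.

Lemma evalc_rho_inner_comp n fa h1 h2 (Hfa : multilinear fa) :
  ev (rho fa (comp_coch n h1 h2) (x :: w)) = inner_comp_sum n fa h1 h2.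
Proof.
rewrite evalc_sum_chain sum_chain_rho /inner_comp_sum -cut5_refine_d3.
apply: eq_sum_split5 => a b c d e.
pose Y := inner_src a b c.
transitivity ((tens_head (map (@hval Ob M) b)
                \o coch_slot Hfa (head_src a b) c (e ++ x :: a) Y (endo Y d) (n + sumd d))
                (ccomp h1 h2 Y d) *~ rho_sign n a b c d e); first by [].
rewrite additive_ccomp -sum_splitMz; apply: eq_sum_split => d1 r.
by rewrite -sum_splitMz; apply: eq_sum_split.
Qed.

(* The two families of terms of L_fa (rho_{fb,g}(x (x) w)): fa inserted in
   the tail of the tensor, or fa applied cyclically around the head. *)
Definition L_rho_tail fa fb : V :=
  \sum_split (a, p, q, r, c, d, e <- w)
    tensor (rho_head fb a (p ++ q ++ r) c d e
              :: p ++ app fa (endo (head_src a (p ++ q ++ r))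
                                   (rho_head fb a (p ++ q ++ r) c d e :: p)) q
              :: r)
    *~ (rho_sign (cdeg g) a (p ++ q ++ r) c d e
        * spow (cdeg fa * sumd (rho_head fb a (p ++ q ++ r) c d e :: p))).

Definition L_rho_cyc fa fb : V :=
  \sum_split (a, p, q, r, c, d, e <- w)
    tensor (app fa (endo (head_src a (p ++ q ++ r))
                         (rho_head fb a (p ++ q ++ r) c d e :: p ++ q))
                (r ++ rho_head fb a (p ++ q ++ r) c d e :: p) :: q)
    *~ (rho_sign (cdeg g) a (p ++ q ++ r) c d e
        * spow (sumd (rho_head fb a (p ++ q ++ r) c d e :: p ++ q) * sumd r)).

Lemma evalc_L_rho fa fb :
  ev (ext (Lop fa) (rho fb g (x :: w))) = L_rho_tail fa fb + L_rho_cyc fa fb.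
Proof.
rewrite evalc_sum_chain sum_chain_ext sum_chain_rho.
under eq_sum_split5 => a b c d e do rewrite sum_chain_Lop.
by rewrite sum_split5D !cut5_refine_b3.
Qed.

(* The terms of rho_{fa,g} (L_fb(x (x) w)).  In the first part of L_fb, the
   letter fb(b) is inserted after x a; it then lies in one of the five pieces
   of the cut made by rho. *)
Definition L_insert fb (a b : word) := app fb (endo (hsrc x) (x :: a)) b.

Definition rho_L_term fa fb (a a1 a2 a3 a4 a5 : word) :=
  tensor (rho_head fa a1 a2 a3 a4 a5 :: a2)
    *~ (spow (cdeg fb * sumd (x :: a)) * rho_sign (cdeg g) a1 a2 a3 a4 a5).

Definition rho_L_in_e fa fb : V :=
  \sum_split (y1, y2, y3, y4, y5, b, c <- w)
    let a := y1 ++ y2 ++ y3 ++ y4 ++ y5 in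
    rho_L_term fa fb a y1 y2 y3 y4 (y5 ++ L_insert fb a b :: c).

Definition rho_L_in_d fa fb : V :=
  \sum_split (y1, y2, y3, y4, b, p1, p2 <- w)
    let a := y1 ++ y2 ++ y3 ++ y4 in
    rho_L_term fa fb a y1 y2 y3 (y4 ++ L_insert fb a b :: p1) p2.

Definition rho_L_in_c fa fb : V :=
  \sum_split (y1, y2, y3, b, p1, p2, p3 <- w)
    let a := y1 ++ y2 ++ y3 in
    rho_L_term fa fb a y1 y2 (y3 ++ L_insert fb a b :: p1) p2 p3.

Definition rho_L_in_b fa fb : V :=
  \sum_split (y1, y2, b, p1, p2, p3, p4 <- w)
    let a := y1 ++ y2 in
    rho_L_term fa fb a y1 (y2 ++ L_insert fb a b :: p1) p2 p3 p4.

Definition rho_L_in_a fa fb : V :=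
  \sum_split (a, b, p1, p2, p3, p4, p5 <- w)
    rho_L_term fa fb a (a ++ L_insert fb a b :: p1) p2 p3 p4 p5.

(* The cyclic part of L_fb puts fb(c, x, a) in front; rho then cuts the
   remaining letters b = p1 ... p5. *)
Definition L_cyc_head fb (a b c : word) := app fb (head_src a b) (c ++ x :: a).

Definition rho_L_cyc fa fb : V :=
  \sum_split (a, p1, p2, p3, p4, p5, c <- w)
    let b := p1 ++ p2 ++ p3 ++ p4 ++ p5 in
    let y := L_cyc_head fb a b c in
    tensor (app fa (endo (head_src a b) (y :: p1 ++ p2))
                (p3 ++ app g (endo (head_src a b) (y :: p1 ++ p2 ++ p3)) p4
                    :: p5 ++ y :: p1) :: p2)
    *~ (spow (sumd (x :: a ++ b) * sumd c)
        * spow (cdeg g * sumd p3 + sumd (y :: p1 ++ p2) * sumd (p3 ++ p4 ++ p5))).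

Lemma evalc_rho_L fa fb :
  ev (ext (rho fa g) (Lop fb (x :: w))) =
  rho_L_in_e fa fb + rho_L_in_d fa fb + rho_L_in_c fa fb + rho_L_in_b fa fb
  + rho_L_in_a fa fb + rho_L_cyc fa fb.
Proof.
rewrite evalc_sum_chain sum_chain_ext sum_chain_Lop.
under eq_sum_split => a r do
  under eq_sum_split => b c do rewrite sum_chain_rho sum_split5_marked.
under [X in _ + X]eq_sum_split => a r do under eq_sum_split => b c do rewrite sum_chain_rho.
rewrite !sum_split3D.
by rewrite cut3_refine_b5 cut3_refine_c5 cut3_refine_a2c4 cut3_refine_a3c3 cut3_refine_a4c2
  cut3_refine_a5.
Qed.

End NormalForms.

(* The sign relating the terms of rho_{fa o fb, g} to those of rho_{fa,g} L_fb. *)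
Definition twist_sign (Ob : Type) (M : zmodType) (g fa fb : coch Ob M) :=
  spow (cdeg fa * cdeg fb) * spow (cdeg fb * (cdeg fa + cdeg g)).

Ltac unfold_terms := rewrite /comp_term /inner_comp_term /rho_L_term /rho_head /L_cyc_head
  /L_insert /inner /inner_src /head_src /rho_sign /twist_sign; cbv zeta.

(* Two terms agree when their tensors agree after normalizing the objects,
   and their signs agree. *)
Ltac match_terms := unfold_terms; rewrite -!mulrzA;
  congr (tensor _ _ *~ _); [objects_solve | sign_solve].

Section Matching.
Variables (Ob : Type) (M V : zmodType) (tens : seq M -> V).
Variables (g : coch Ob M) (x : hel Ob M) (w : seq (hel Ob M)).
Implicit Types fa fb : coch Ob M.

Lemma HEl_app (f : coch Ob M) X l Z D :
  Z = endo X l -> D = cdeg f + sumd l -> HEl X Z D (cfun f X l) = app f X l.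
Proof. by move=> -> ->. Qed.

Lemma comp_over_all_eq fa fb :
  comp_over_all tens g x w fa fb = L_rho_cyc tens g x w fa fb.
Proof. by apply: eq_sum_split7 => *; match_terms. Qed.

Lemma comp_over_inner_eq fa fb :
  comp_over_inner tens g x w fa fb = inner_comp_sum tens x w (cdeg fb + cdeg g) fa fb g.
Proof.
apply: eq_sum_split7 => a b p q d y z; unfold_terms.
rewrite HEl_app; [by match_terms | objects_solve |].
by rewrite !(sumd_cat, sumd_cons, hdeg_app); lia.
Qed.

Lemma comp_in_c_eq fa fb :
  comp_in_c tens g x w fa fb = rho_L_in_c tens g x w fa fb *~ twist_sign g fa fb.
Proof. by rewrite -sum_split7Mz; apply: eq_sum_split7 => *; match_terms. Qed.

Lemma comp_in_e_eq fa fb :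
  comp_in_e tens g x w fa fb = rho_L_in_e tens g x w fa fb *~ twist_sign g fa fb.
Proof. by rewrite -sum_split7Mz; apply: eq_sum_split7 => *; match_terms. Qed.

Lemma comp_over_x_eq fa fb :
  comp_over_x tens g x w fa fb = rho_L_cyc tens g x w fa fb *~ twist_sign g fa fb.
Proof. by rewrite -sum_split7Mz; apply: eq_sum_split7 => *; match_terms. Qed.

Lemma comp_in_a_eq fa fb :
  comp_in_a tens g x w fa fb = rho_L_in_a tens g x w fa fb *~ twist_sign g fa fb.
Proof. by rewrite -sum_split7Mz; apply: eq_sum_split7 => *; match_terms. Qed.

Lemma inner_comp_rev_eq fa fb :
  inner_comp_sum tens x w (cdeg fb + cdeg g) fa g fb *~ spow (cdeg fb * cdeg g)
  = rho_L_in_d tens g x w fa fb *~ twist_sign g fa fb.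
Proof.
rewrite -!sum_split7Mz; apply: eq_sum_split7 => a b c d1 d2 d3 e; unfold_terms.
rewrite HEl_app; [by match_terms | objects_solve |].
by rewrite !(sumd_cat, sumd_cons, hdeg_app); lia.
Qed.

Lemma L_rho_tail_eq fa fb :
  L_rho_tail tens g x w fa fb =
  rho_L_in_b tens g x w fb fa *~ spow (cdeg fa * (cdeg fb + cdeg g)).
Proof. by rewrite -sum_split7Mz; apply: eq_sum_split7 => *; match_terms. Qed.

End Matching.

(* Identities between sums in a Z-module whose two sides have the same
   summands up to order. *)
Ltac summands t := lazymatch t with
  | ?a + ?b => let la := summands a in let lb := summands b in constr:(la ++ lb)
  | _ => constr:([:: t]) end.
Ltac gen_summands t := lazymatch t with
  | ?a + ?b => gen_summands a; gen_summands b
  | _ => let y := fresh "y" in move: (t) => y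
  end.
Ltac zmod_perm := lazymatch goal with |- ?L = _ => gen_summands L end;
  lazymatch goal with |- ?L = ?R =>
  let lL := summands L in let lR := summands R in
  transitivity (\sum_(t <- lL) t); [by rewrite ?big_cat ?big_seq1 | ];
  transitivity (\sum_(t <- lR) t); [ | by rewrite ?big_cat ?big_seq1];
  apply: perm_big; apply/permP => p /=; ring end.

Section PreLie.
Variables (Ob : Type) (M V : zmodType) (tens : seq M -> V).
Hypothesis tens_add : forall (w1 w2 : seq M) (a b : M),
  tens (w1 ++ (a + b) :: w2) = tens (w1 ++ a :: w2) + tens (w1 ++ b :: w2).
Variables (g : coch Ob M) (x : hel Ob M) (w : seq (hel Ob M)).
Local Notation word := (seq (hel Ob M)).
Local Notation coch := (coch Ob M).
Local Notation ev := (evalc tens).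
Local Notation W := (x :: w).
Implicit Types (f fa fb : coch) (n : int).

Lemma evalc_cat (c1 c2 : chain Ob M) : ev (c1 ++ c2) = ev c1 + ev c2.
Proof. exact: big_cat. Qed.

Lemma evalc_scale a (c : chain Ob M) : ev (scalec a c) = ev c *~ a.
Proof.
rewrite evalc_sum_chain sum_chain_scale /sum_chain mulrz_suml.
by apply: eq_bigr => p _; rewrite mulrC mulrzA.
Qed.

Lemma evalc_gcomm A dA B dB (u : word) :
  ev (gcomm A dA B dB u) = ev (ext A (B u)) + ev (ext B (A u)) *~ (- spow (dA * dB)).
Proof. by rewrite evalc_cat evalc_scale. Qed.

(* Only the values of the outer cochain of rho matter, not its degree. *)
Lemma evalc_rho_comp_deg n n' f h :
  ev (rho (comp_coch n f h) g W) = ev (rho (comp_coch n' f h) g W).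
Proof. by rewrite !evalc_sum_chain !sum_chain_rho. Qed.

Lemma evalc_rho_bracket_l f1 f2 :
  ev (rho (cbr f1 f2) g W) = ev (rho (comp_coch (cdeg f1 + cdeg f2) f1 f2) g W)
     - ev (rho (comp_coch (cdeg f1 + cdeg f2) f2 f1) g W) *~ spow (cdeg f1 * cdeg f2).
Proof.
rewrite !evalc_sum_chain !sum_chain_rho -sum_split5Mz -sum_split5N -sum_split5D.
apply: eq_sum_split5 => a b c d e.
set L := (_ ++ _ :: _ ++ _ :: a); set X := endo _ _.
transitivity (tens_head tens_add (map (@hval Ob M) b)
  (ccomp f1 f2 X L - ccomp f2 f1 X L *~ spow (cdeg f1 * cdeg f2))
  *~ spow (cdeg g * sumd c + sumd (x :: a ++ b) * sumd (c ++ d ++ e))); first by [].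
by rewrite raddfB raddfMz mulrzBl mulrzAC.
Qed.

Lemma evalc_rho_bracket_r f h (Hf : multilinear f) :
  ev (rho f (cbr h g) W) = ev (rho f (comp_coch (cdeg h + cdeg g) h g) W)
     - ev (rho f (comp_coch (cdeg h + cdeg g) g h) W) *~ spow (cdeg h * cdeg g).
Proof.
rewrite !evalc_sum_chain !sum_chain_rho -sum_split5Mz -sum_split5N -sum_split5D.
apply: eq_sum_split5 => a b c d e.
set Y := endo (hsrc x) (x :: a ++ b ++ c).
transitivity ((tens_head tens_add (map (@hval Ob M) b)
   \o coch_slot Hf (endo (hsrc x) (x :: a ++ b)) c (e ++ x :: a) Y (endo Y d)
        (cdeg h + cdeg g + sumd d))
  (ccomp h g Y d - ccomp g h Y d *~ spow (cdeg h * cdeg g))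
  *~ spow ((cdeg h + cdeg g) * sumd c + sumd (x :: a ++ b) * sumd (c ++ d ++ e))); first by [].
by rewrite raddfB raddfMz mulrzBl mulrzAC.
Qed.

Definition rho_assoc fa fb : V :=
  ev (rho (comp_coch (cdeg fa + cdeg fb) fa fb) g W)
  - ev (rho fa (comp_coch (cdeg fb + cdeg g) fb g) W)
  + ev (rho fa (comp_coch (cdeg fb + cdeg g) g fb) W) *~ spow (cdeg fb * cdeg g).

(* The terms of rho_{fa,g} L_fb other than those where fb(..) lands in the
   tail of the tensor. *)
Definition rho_L_rest fa fb : V :=
  rho_L_in_a tens g x w fa fb + rho_L_in_c tens g x w fa fb + rho_L_in_d tens g x w fa fb
  + rho_L_in_e tens g x w fa fb + rho_L_cyc tens g x w fa fb.

(* The associator identity: the terms where fb is inserted strictly inside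
   g(d) cancel, the rest are terms of L_fa rho_{fb,g} and of rho_{fa,g} L_fb. *)
Lemma rho_assoc_expand fa fb (Hfa : multilinear fa) :
  rho_assoc fa fb = L_rho_cyc tens g x w fa fb + rho_L_rest fa fb *~ twist_sign g fa fb.
Proof.
rewrite /rho_assoc (evalc_rho_comp tens_add) !(evalc_rho_inner_comp tens_add) //.
rewrite comp_over_inner_eq comp_in_c_eq comp_over_all_eq comp_in_e_eq comp_over_x_eq.
rewrite comp_in_a_eq inner_comp_rev_eq /rho_L_rest !mulrzDl.
set B := inner_comp_sum _ _ _ _ _ _ _.
by rewrite -[RHS]addr0 -(subrr B); zmod_perm.
Qed.

Lemma evalc_L_rho_comm fa fb :
  ev (gcomm (Lop fa) (cdeg fa) (rho fb g) (cdeg fb + cdeg g) W) =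
  L_rho_cyc tens g x w fa fb - rho_L_rest fb fa *~ spow (cdeg fa * (cdeg fb + cdeg g)).
Proof.
rewrite evalc_gcomm evalc_L_rho evalc_rho_L L_rho_tail_eq /rho_L_rest.
set s := spow _; set Y := rho_L_in_b _ _ _ _ fb fa.
rewrite mulrNz !mulrzDl !opprD -[RHS]addr0 -(subrr (Y *~ s)).
by zmod_perm.
Qed.

Lemma evalc_lhs62 f1 f2 (H1 : multilinear f1) (H2 : multilinear f2) :
  ev (lhs62 f1 f2 g W) = rho_assoc f1 f2 - rho_assoc f2 f1 *~ spow (cdeg f1 * cdeg f2).
Proof.
rewrite /lhs62 !evalc_cat !evalc_scale evalc_rho_bracket_l !evalc_rho_bracket_r //.
rewrite (evalc_rho_comp_deg (cdeg f1 + cdeg f2) (cdeg f2 + cdeg f1) f2 f1) /rho_assoc.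
rewrite !(mulrzBl, mulrzDl, mulrN1z, opprD, opprK) -!mulrzA.
by zmod_perm.
Qed.

End PreLie.

Unset Implicit Arguments. Set Strict Implicit.

Theorem proposition6p2 (Ob : Type) (M : zmodType)
  (hom : Ob -> Ob -> int -> pred M)
  (f1 f2 g : coch Ob M)
  (Hf1 : coch_ok hom f1) (Hf2 : coch_ok hom f2) (Hg : coch_ok hom g)
  (V : zmodType) (tens : seq M -> V)
  (tens_add : forall (w1 w2 : seq M) (a b : M),
      tens (w1 ++ (a + b) :: w2) = tens (w1 ++ a :: w2) + tens (w1 ++ b :: w2))
  (w : seq (hel Ob M)) (Hw : cyc_word hom w) :
  evalc tens (lhs62 f1 f2 g w) = evalc tens (rhs62 f1 f2 g w).
Proof.
case: Hw => x [w' [-> _]].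
have [H1 _] := Hf1; have [H2 _] := Hf2.
rewrite (evalc_lhs62 tens_add) // !(rho_assoc_expand tens_add) //.
rewrite /rhs62 evalc_cat evalc_scale !evalc_L_rho_comm.
have sign12 : twist_sign g f1 f2 =
    spow (cdeg f2 * (cdeg f1 + cdeg g)) * spow (cdeg f1 * cdeg f2) by rewrite mulrC.
have sign21 : twist_sign g f2 f1 * spow (cdeg f1 * cdeg f2) =
    spow (cdeg f1 * (cdeg f2 + cdeg g)) by rewrite /twist_sign; sign_solve.
rewrite !(mulrzBl, mulrzDl, mulrNz, opprD, opprK) -!mulrzA sign12 sign21.
by zmod_perm.
Qed.
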